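(* In the Mandelbrot–Shepp model with any parameter $\alpha>0$, $$\mathbb{P}_\alpha(\mathcal{V}\neq\emptyset)=\mathbb{P}_\alpha\Big(\bigcap_{n=1}^\infty\big\{\mathcal{V}(\omega[\tfrac1n])\neq\emptyset\big\}\Big).$$
   Context: Mandelbrot–Shepp model: $\mathbb{S}^1=\mathbb{R}/\mathbb{Z}$ represented by $[0,1)$. Under $\mathbb{P}_\alpha$, $\omega=\sum_i\delta_{(x_i,y_i)}$ is a Poisson point process on $\mathbb{S}^1\times(0,\infty)$ with intensity $\alpha\,dx\otimes\frac{dy}{y^2}$. For $(x,y)$ let $\Pi(x,y)=[0,1)$ if $y>1$, $(x,x+y)$ if $y\le1$ and $x+y\le1$, and $(x,1)\cup[0,x+y-1)$ if $y\le1$ and $x+y>1$. For a configuration $\omega$, $\mathcal{C}(\omega)=\bigcup_i\Pi(x_i,y_i)$ and $\mathcal{V}(\omega)=[0,1)\setminus\mathcal{C}(\omega)$; $\mathcal{V}=\mathcal{V}(\omega)$. For $z>0$, the truncated configuration is $\omega[z]=\sum_i\delta_{(x_i,y_i)}\mathbf{1}\{y_i>z\}$. *)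

From HB Require Import structures.
From mathcomp Require Import all_boot all_order all_algebra.
From mathcomp Require Import all_classical all_reals all_analysis.
Set Implicit Arguments. Unset Strict Implicit. Unset Printing Implicit Defensive.
Import Order.TTheory GRing.Theory Num.Theory.
Local Open Scope classical_set_scope.
Local Open Scope ring_scope.

Section MS.
Context {R : realType}.

(* A point configuration on S^1 x (0,oo): a set of points (x,y), x in [0,1), y > 0. *)
Definition strip : set (R * R) := [set z | 0 <= z.1 < 1 /\ 0 < z.2].

Definition Pi (z : R * R) : set R :=
  let x := z.1 in let y := z.2 in
  if 1 < y then [set t | 0 <= t < 1]
  else if x + y <= 1 then [set t | x < t < x + y]
  else [set t | x < t < 1] `|` [set t | 0 <= t < x + y - 1].

Definition covered (w : set (R * R)) : set R := \bigcup_(z in w) Pi z.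

Definition vacant (w : set (R * R)) : set R :=
  [set t | 0 <= t < 1] `\` covered w.

Definition trunc (w : set (R * R)) (z : R) : set (R * R) :=
  [set p | w p /\ z < p.2].

Definition npoints (w : set (R * R)) (B : set (R * R)) : \bar R :=
  counting (w `&` B).

Definition ms_intensity (alpha : R) (B : set (R * R)) : \bar R :=
  (\int[((@lebesgue_measure R) \x (@lebesgue_measure R))%E]_(z in B)
     (alpha / z.2 ^+ 2)%:E)%E.

Definition pois (m : R) (k : nat) : R := m ^+ k / k`!%:R * expR (- m).

Definition MS_PPP (alpha : R) (d : measure_display) (T : measurableType d)
    (P : probability T R) (omega : T -> set (R * R)) : Prop :=
  [/\ forall t, omega t `<=` strip,
      forall (B : set (R * R)) (n : nat), measurable B ->
        measurable [set t | npoints (omega t) B = (n%:R)%:E] &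
      forall (k : nat) (B : 'I_k -> set (R * R)) (n : 'I_k -> nat),
        (forall i, measurable (B i)) ->
        (forall i, B i `<=` strip) ->
        (forall i j, i != j -> B i `&` B j = set0) ->
        (forall i, (ms_intensity alpha (B i) < +oo)%E) ->
        P [set t | forall i, npoints (omega t) (B i) = ((n i)%:R)%:E] =
        (\prod_(i < k) pois (fine (ms_intensity alpha (B i))) (n i))%:E ].

End MS.

From HB Require Import structures.
From mathcomp Require Import all_boot all_order all_algebra.
From mathcomp Require Import all_classical all_reals all_analysis.
Import Order.TTheory GRing.Theory Num.Theory.
Import numFieldNormedType.Exports.
Local Open Scope classical_set_scope.
Local Open Scope ring_scope.

(* The two events coincide for every configuration, so no Poisson structure is
   needed. If [vacant w] is empty, the arcs of [w] cover the circle; seen on the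
   compact segment [0,1] (with 1 covered by whatever covers 0) they are open,
   so finitely many of them suffice, and these all have length at least some
   1/(n+1). Hence the truncated configuration already covers the circle. *)

Section CoveringByArcs.
Context {R : realType}.

(* An open subset of R whose trace on [0,1) is the arc [Pi z]: the wrapped
   part [0, x+y-1) of [Pi z] becomes ]-oo, x+y-1). *)
Definition open_arc (z : R * R) : set R :=
  if 1 < z.2 then setT
  else if z.1 + z.2 <= 1 then [set t | z.1 < t] `&` [set t | t < z.1 + z.2]
  else [set t | z.1 < t] `|` [set t | t < z.1 + z.2 - 1].

Lemma open_open_arc z : open (open_arc z).
Proof.
rewrite /open_arc; case: ifP => _; first exact: openT.
case: ifP => _; first by apply: openI; [exact: open_gt | exact: open_lt].
by apply: openU; [exact: open_gt | exact: open_lt].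
Qed.

Lemma open_arcE {z : R * R} {t : R} :
  strip z -> 0 <= t < 1 -> open_arc z t <-> Pi z t.
Proof.
case: z => x y [/= /andP[x0 x1] y0] /andP[t0 t1]; rewrite /open_arc /Pi /=.
case: ifP => _; first by split => // _; apply/andP.
case: ifP => _.
  split; first by move=> [/= -> ->].
  by move=> /andP[].
split.
  by move=> [/= a|/= a]; [left|right] => /=; rewrite ?a ?t0 ?t1.
by move=> [/= /andP[a _]|/= /andP[_ a]]; [left|right].
Qed.

Lemma open_arc1 {z : R * R} : strip z -> open_arc z 0 -> open_arc z 1.
Proof.
case: z => x y [/= /andP[x0 x1] y0]; rewrite /open_arc /=.
case: ifP => _ //; case: ifP => _; last by left.
by move=> [/= x_lt0 _]; move: x_lt0; rewrite ltNge x0.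
Qed.

Lemma vacant_sub_trunc (w : set (R * R)) (h : R) :
  vacant w `<=` vacant (trunc w h).
Proof.
move=> t [t01 not_covered]; split => // -[p [wp _] Pp].
by apply: not_covered; exists p.
Qed.

Lemma vacant_eq0_covered {w : set (R * R)} {t : R} :
  vacant w = set0 -> 0 <= t < 1 -> exists2 z, w z & Pi z t.
Proof.
move=> w_covers t01; apply: contrapT => not_covered.
have : vacant w t by split => // -[z wz Pz]; apply: not_covered; exists z.
by rewrite w_covers.
Qed.

Lemma segment_covered_open_arc {w : set (R * R)} {x : R} :
  w `<=` strip -> vacant w = set0 -> x \in `[0, 1] ->
  exists2 z, w z & open_arc z x.
Proof.
move=> w_strip w_covers /andP[]; rewrite !bnd_simp => x0 x1.
have [->|x_neq1] := eqVneq x 1.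
  have z01 : 0 <= (0 : R) < 1 by rewrite lexx ltr01.
  have [z wz Pz] := vacant_eq0_covered w_covers z01.
  exists z => //; apply: (open_arc1 (w_strip _ wz)).
  exact/(open_arcE (w_strip _ wz) z01).
have x01 : 0 <= x < 1 by rewrite x0 lt_neqAle x_neq1.
have [z wz Pz] := vacant_eq0_covered w_covers x01.
by exists z => //; apply/(open_arcE (w_strip _ wz) x01).
Qed.

Lemma vacant_eq0_trunc {w : set (R * R)} : w `<=` strip ->
  vacant w = set0 -> exists n : nat, vacant (trunc w n.+1%:R^-1) = set0.
Proof.
move=> w_strip w_covers.
have /(_ nat \oo (fun n x => exists z, [/\ w z, n.+1%:R^-1 < z.2 & open_arc z x]))
    [x x01|N _ cover_N] := (compact_near_coveringP _).1 (@segment_compact R 0 1).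
  have [z wz zx] := segment_covered_open_arc w_strip w_covers x01.
  have z2_gt0 : 0 < z.2 by have [] := w_strip _ wz.
  exists (open_arc z, [set n : nat | n.+1%:R^-1 < z.2]).
    split; last exact: near_infty_natSinv_lt (PosNum z2_gt0).
    by apply: open_nbhs_nbhs; split => //; exact: open_open_arc.
  by case=> n y [/= zy n_z2]; exists z.
exists N; apply/seteqP; split => // t [t01 not_covered].
have [|z [wz N_z2 zt]] := cover_N N (leqnn N) t.
  by case/andP: t01 => t0 t1; apply/andP; rewrite !bnd_simp t0 ltW.
by apply: not_covered; exists z => //; apply/(open_arcE (w_strip _ wz) t01).
Qed.

Lemma vacant_neq0_trunc {w : set (R * R)} : w `<=` strip ->
  vacant w != set0 <-> forall n : nat, vacant (trunc w n.+1%:R^-1) != set0.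
Proof.
move=> w_strip; split => [/set0P[x wx] n|vacant_trunc_neq0].
  by apply/set0P; exists x; exact: vacant_sub_trunc.
apply/negP => /eqP w_covers.
have [n covers_n] := vacant_eq0_trunc w_strip w_covers.
by move: (vacant_trunc_neq0 n); rewrite covers_n eqxx.
Qed.

End CoveringByArcs.

Theorem mainTheorem14 (R : realType) (alpha : R) (halpha : 0 < alpha)
    (d : measure_display) (T : measurableType d) (P : probability T R)
    (omega : T -> set (R * R)) :
  MS_PPP alpha P omega ->
  P [set t | vacant (omega t) != set0] =
  P (\bigcap_(n : nat)
       [set t | vacant (trunc (omega t) (n.+1%:R)^-1) != set0]).
Proof.
move=> [omega_strip _ _]; congr (P _); apply/seteqP; split => t /=.
  move/(vacant_neq0_trunc (omega_strip t)) => vacant_trunc n _ /=.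
  exact: vacant_trunc.
move=> vacant_trunc; apply/(vacant_neq0_trunc (omega_strip t)) => n.
exact: (vacant_trunc n I).
Qed.
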